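(* Let $r\ge1$, $\mathbf{m}\in\mathbb{N}^r$, $m=m_1+\cdots+m_r$, $\mathbf{f}\in\mathbb{C}^r$, $b\in\mathbb{C}$, and let $0\le k\le m$ be integers. Then $$ \sum_{i=0}^{k}\frac{(-k)_i(b)_i}{(-m)_{i}\,i!}\,{}_{r+1}F_{r}\!\left(\begin{matrix}-i,\mathbf{f}+\mathbf{m}\\\mathbf{f}\end{matrix}\right) =\frac{(-b-m)_k}{(-m)_k}\,{}_{r+2}F_{r+1}\!\left(\begin{matrix}-k,b,\mathbf{f}+\mathbf{m}\\ b+m-k+1,\mathbf{f}\end{matrix}\right). $$
   Context: $(a)_k=\Gamma(a+k)/\Gamma(a)$. $\mathbf{f}+\mathbf{m}$ is componentwise; a vector among hypergeometric parameters means its components are listed. ${}_pF_q(\mathbf{a};\mathbf{b})$ denotes the terminating generalized hypergeometric series evaluated at argument $1$. Parameters are assumed such that no denominator in these terminating series vanishes. *)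

From HB Require Import structures.
From mathcomp Require Import all_boot all_order all_algebra.
Set Implicit Arguments. Unset Strict Implicit. Unset Printing Implicit Defensive.
Import Order.TTheory GRing.Theory Num.Theory.
Local Open Scope ring_scope.

Definition poch (C : fieldType) (a : C) (n : nat) : C :=
  \prod_(i < n) (a + i%:R).

(* Terminating generalized hypergeometric series at argument 1, with
   termination index n (the series is used only when -n is among the
   numerator parameters, so that all terms with j > n vanish):
   pFq(as; bs) = sum_{j=0}^{n} prod_a (a)_j / (prod_b (b)_j * j!). *)
Definition hypF (C : fieldType) (n : nat) (as_ bs : seq C) : C :=
  \sum_(j < n.+1)
     (\prod_(a <- as_) poch a j) / ((\prod_(b <- bs) poch b j) * (j`!)%:R).

From HB Require Import structures.
From mathcomp Require Import all_boot all_order all_algebra.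
Import Order.TTheory GRing.Theory Num.Theory.
From mathcomp Require Import ring.
Local Open Scope ring_scope.

(* Extend each inner series on the left to the common length k + 1 (its terms
   vanish past i) and exchange the two sums: both sides become combinations of
   Q_j = prod (f+m)_j / prod (f)_j, matched coefficient by coefficient.  The
   coefficient of Q_j on the left is sum_i (-k)_i (b)_i (-i)_j / ((-m)_i i! j!);
   its terms with i < j vanish, and after the shift i = j + n it is a
   Chu-Vandermonde sum with parameters k - j, m - j and b + j. *)

Section PochField.
Variable C : fieldType.
Implicit Types (a x y : C) (n p q : nat).

Lemma poch0 a : poch a 0 = 1.
Proof. by rewrite /poch big_ord0. Qed.

Lemma pochS a n : poch a n.+1 = poch a n * (a + n%:R).
Proof. by rewrite /poch big_ord_recr. Qed.

Lemma pochD a p q : poch a (p + q) = poch a p * poch (a + p%:R) q.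
Proof.
rewrite /poch big_split_ord /=; congr (_ * _); apply: eq_bigr => i _ /=.
by rewrite natrD addrA.
Qed.

Lemma poch_opp x n : poch (- x) n = (-1) ^+ n * poch (x - n%:R + 1) n.
Proof.
rewrite /poch.
have -> : \prod_(i < n) (- x + i%:R) = \prod_(i < n) (-1 * (x - i%:R)).
  by apply: eq_bigr => i _; ring.
rewrite big_split /= prodr_const card_ord; congr (_ * _).
rewrite (reindex_inj rev_ord_inj) /=; apply: eq_bigr => i _.
by rewrite natrB ?ltn_ord // -natr1; ring.
Qed.

Lemma poch_oppn_eq0 {i j : nat} : (i < j)%N -> poch (- i%:R : C) j = 0.
Proof. by move=> lt_ij; rewrite /poch (bigD1 (Ordinal lt_ij)) //= addNr mul0r. Qed.

Lemma poch_natS_fact p n : poch (p.+1%:R : C) n * p`!%:R = (p + n)`!%:R.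
Proof.
elim: n => [|n IHn]; first by rewrite poch0 mul1r addn0.
by rewrite pochS mulrAC IHn addnS factS natrM -natrD addSn mulrC.
Qed.

Lemma poch_addr_binomial x y n :
  poch (x + y) n = \sum_(i < n.+1) 'C(n, i)%:R * (poch x i * poch y (n - i)).
Proof.
elim: n => [|n IHn]; first by rewrite big_ord1 !poch0 bin0 !mul1r.
have split_factor (i : 'I_n.+1) :
    'C(n, i)%:R * (poch x i * poch y (n - i)) * (x + y + n%:R) =
    'C(n, i)%:R * (poch x i.+1 * poch y (n - i))
    + 'C(n, i)%:R * (poch x i * poch y (n - i).+1).
  have le_in : (i <= n)%N := ltn_ord i.
  by rewrite !pochS natrB //; ring.
rewrite pochS IHn mulr_suml (eq_bigr _ (fun i _ => split_factor i)) big_split /=.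
rewrite [in RHS]big_ord_recl /= bin0 poch0 subn0 !mul1r.
under [X in _ = _ + X]eq_bigr => i _ do
  rewrite /bump add1n subSS binS natrD mulrDl addrC.
rewrite big_split /= addrCA; congr (_ + _).
rewrite big_ord_recl /= bin0 poch0 subn0 !mul1r; congr (_ + _).
rewrite [in RHS]big_ord_recr /= bin_small // mul0r addr0.
by apply: eq_bigr => i _; rewrite /bump add1n subnSK.
Qed.

End PochField.

Section PochNum.
Variable C : numFieldType.
Implicit Types (B : C) (n M N : nat).

Lemma natr_fact_neq0 n : (n`!%:R : C) != 0.
Proof. by rewrite pnatr_eq0 -lt0n fact_gt0. Qed.

Lemma poch_natS_neq0 p n : poch (p.+1%:R : C) n != 0.
Proof.
apply: contraNneq (natr_fact_neq0 (p + n)) => pp0.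
by rewrite -poch_natS_fact pp0 mul0r.
Qed.

Lemma poch_oppn_neq0 M n : (n <= M)%N -> poch (- M%:R : C) n != 0.
Proof.
move=> le_nM; rewrite poch_opp mulf_neq0 ?signr_eq0 //.
by rewrite -natrB // natr1 poch_natS_neq0.
Qed.

Lemma poch_oppn_binomial N n : (n <= N)%N ->
  poch (- N%:R : C) n = (-1) ^+ n * ('C(N, n)%:R * n`!%:R).
Proof.
move=> le_nN; rewrite poch_opp -natrB // natr1; congr (_ * _).
apply: (mulIf (natr_fact_neq0 (N - n))).
by rewrite poch_natS_fact subnK // -mulrA -!natrM bin_fact.
Qed.

Lemma chu_vandermonde B N M : (N <= M)%N ->
  \sum_(n < N.+1) poch (- N%:R) n * poch B n / (poch (- M%:R) n * n`!%:R)
    = poch (- M%:R - B) N / poch (- M%:R) N.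
Proof.
move=> le_NM; have pM0 : poch (- M%:R : C) N != 0 by exact: poch_oppn_neq0.
apply: (mulIf pM0); rewrite divfK // mulr_suml.
rewrite (_ : - M%:R - B = - (M%:R + B)); last by ring.
rewrite [in RHS]poch_opp (_ : M%:R + B - N%:R + 1 = B + ((M - N)%:R + 1)); last first.
  by rewrite natrB //; ring.
rewrite poch_addr_binomial mulr_sumr; apply: eq_bigr => -[n /=].
rewrite ltnS => le_nN _; have le_nM := leq_trans le_nN le_NM.
have pochM : poch (- M%:R : C) N
    = poch (- M%:R) n * ((-1) ^+ (N - n) * poch ((M - N)%:R + 1) (N - n)).
  rewrite -{1}(subnKC le_nN) pochD.
  rewrite (_ : - M%:R + n%:R = - (M - n)%:R); last by rewrite natrB //; ring.
  rewrite [poch (- _) (N - n)]poch_opp !natrB //.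
  by congr (_ * (_ * poch _ _)); ring.
have signN : (-1) ^+ N = (-1) ^+ n * (-1) ^+ (N - n) :> C by rewrite -exprD subnKC.
rewrite pochM poch_oppn_binomial // signN; field.
by rewrite poch_oppn_neq0 // natr_fact_neq0.
Qed.

End PochNum.

Lemma big_ord_shift_zero_prefix {V : nmodType} {F : nat -> V} {j k : nat} :
  (j <= k)%N -> (forall i, (i < j)%N -> F i = 0) ->
  \sum_(i < k.+1) F i = \sum_(n < (k - j).+1) F (n + j)%N.
Proof.
move=> le_jk F0; rewrite -!(big_mkord xpredT).
rewrite (big_cat_nat (leq0n j) (leqW le_jk)) /= big_nat_cond big1 ?add0r; last first.
  by move=> i /andP[/andP[_ lt_ij] _]; apply: F0.
by rewrite -{1}[j]add0n big_addn subSn // big_mkord.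
Qed.

Lemma hypF_widen {C : fieldType} {i n : nat} (as_ bs : seq C) : (i <= n)%N ->
  hypF i (- i%:R :: as_) bs = hypF n (- i%:R :: as_) bs.
Proof.
move=> le_in.
pose F j := \prod_(a <- - i%:R :: as_) poch a j / (\prod_(c <- bs) poch c j * j`!%:R).
rewrite /hypF (big_ord_widen _ F (leq_ltn_trans le_in (ltnSn n))).
rewrite big_mkcond; apply: eq_bigr => j _; case: ltnP => // lt_ij.
by rewrite big_cons poch_oppn_eq0 ?mul0r.
Qed.

Section ChuCoefficient.
Variable C : numFieldType.
Variables (b : C) (k m j : nat).
Hypotheses (le_jk : (j <= k)%N) (le_km : (k <= m)%N).
Let le_jm : (j <= m)%N := leq_trans le_jk le_km.

Let term (i : nat) : C :=
  (poch (- k%:R) i * poch b i) / (poch (- m%:R) i * i`!%:R)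
    * (poch (- i%:R) j / j`!%:R).

Lemma term_shift n : (n <= k - j)%N ->
  term (n + j) = poch (- k%:R) j * poch b j * (-1) ^+ j / (poch (- m%:R) j * j`!%:R)
    * (poch (- (k - j)%:R) n * poch (b + j%:R) n
       / (poch (- (m - j)%:R) n * n`!%:R)).
Proof.
move=> le_nN; have le_nM : (n <= m - j)%N by rewrite (leq_trans le_nN) ?leq_sub2r.
have shift_oppn (M : nat) : (j <= M)%N ->
    poch (- M%:R : C) (n + j) = poch (- M%:R) j * poch (- (M - j)%:R) n.
  by move=> le_jM; rewrite addnC pochD natrB //; congr (_ * poch _ _); ring.
have poch_b : poch b (n + j) = poch b j * poch (b + j%:R) n by rewrite addnC pochD.
have fact_shift : ((n + j)`!)%:R = poch (n.+1%:R : C) j * n`!%:R.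
  by rewrite poch_natS_fact.
have poch_j : poch (- (n + j)%:R : C) j = (-1) ^+ j * poch (n.+1%:R) j.
  by rewrite poch_opp; congr (_ * poch _ _); rewrite natrD -natr1; ring.
rewrite /term !shift_oppn // poch_b fact_shift poch_j; field.
by rewrite !poch_oppn_neq0 // poch_natS_neq0 !natr_fact_neq0.
Qed.

Lemma chu_coefficient : poch (b + m%:R - k%:R + 1) j != 0 ->
  \sum_(i < k.+1) term i
  = poch (- b - m%:R) k / poch (- m%:R) k
      * (poch (- k%:R) j * poch b j / (poch (b + m%:R - k%:R + 1) j * j`!%:R)).
Proof.
move=> pb0; have le_NM : (k - j <= m - j)%N by rewrite leq_sub2r.
rewrite (big_ord_shift_zero_prefix le_jk); last first.
  by move=> i lt_ij; rewrite /term (poch_oppn_eq0 C lt_ij) mul0r !mulr0.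
rewrite (eq_bigr _ (fun (n : 'I_(k - j).+1) _ => term_shift n (ltn_ord n))).
rewrite -mulr_sumr chu_vandermonde //.
rewrite (_ : - (m - j)%:R - (b + j%:R) = - b - m%:R); last by rewrite natrB //; ring.
have pochm : poch (- m%:R : C) k = poch (- m%:R) j * poch (- (m - j)%:R) (k - j).
  by rewrite -{1}(subnKC le_jk) pochD natrB //; congr (_ * poch _ _); ring.
have pochbm : poch (- b - m%:R) k
    = poch (- b - m%:R) (k - j) * ((-1) ^+ j * poch (b + m%:R - k%:R + 1) j).
  rewrite -{1}(subnK le_jk) pochD.
  rewrite (_ : - b - m%:R + (k - j)%:R = - (b + m%:R - (k - j)%:R)); last by ring.
  by rewrite poch_opp natrB //; congr (_ * (_ * poch _ _)); ring.
rewrite pochm pochbm; field.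
by rewrite pb0 !poch_oppn_neq0 // natr_fact_neq0.
Qed.

End ChuCoefficient.

Lemma hypF_chu_transform (C : numFieldType) (b : C) (k m : nat) (as_ bs : seq C) :
  (k <= m)%N -> (forall j, (j <= k)%N -> poch (b + m%:R - k%:R + 1) j != 0) ->
  \sum_(i < k.+1)
     (poch (- k%:R) i * poch b i) / (poch (- m%:R) i * i`!%:R)
       * hypF i (- i%:R :: as_) bs
  = poch (- b - m%:R) k / poch (- m%:R) k
      * hypF k [:: - k%:R, b & as_] (b + m%:R - k%:R + 1 :: bs).
Proof.
move=> le_km pb0.
under eq_bigr => i _ do rewrite (hypF_widen as_ bs (ltn_ord i : (i <= k)%N)).
rewrite /hypF mulr_sumr; under eq_bigr => i _ do rewrite mulr_sumr.
rewrite exchange_big /=; apply: eq_bigr => j _.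
pose Q := (\prod_(a <- as_) poch a j) / (\prod_(c <- bs) poch c j).
have le_jk : (j <= k)%N := ltn_ord j.
rewrite (eq_bigr (fun i : 'I_k.+1 => Q * ((poch (- k%:R) i * poch b i)
    / (poch (- m%:R) i * i`!%:R) * (poch (- i%:R) j / j`!%:R)))); last first.
  by move=> i _; rewrite big_cons /Q !invfM; ring.
by rewrite -mulr_sumr chu_coefficient // ?pb0 // !big_cons /Q !invfM; ring.
Qed.

Theorem lemma4 (C : numClosedFieldType) (r : nat) (hr : (0 < r)%N)
  (mv : 'I_r -> nat) (f : 'I_r -> C) (b : C) (k : nat)
  (hk : (k <= \sum_(l < r) mv l)%N)
  (hf : forall (l : 'I_r) (j : nat), (j <= k)%N -> poch (f l) j != 0)
  (hb : forall j : nat, (j <= k)%N ->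
          poch (b + (\sum_(l < r) mv l)%:R - k%:R + 1) j != 0) :
  let m := (\sum_(l < r) mv l)%N in
  let fm := [seq f l + (mv l)%:R | l <- enum 'I_r] in
  let fs := [seq f l | l <- enum 'I_r] in
  \sum_(i < k.+1)
     (poch (- k%:R) i * poch b i) / (poch (- m%:R) i * (i`!)%:R)
       * hypF i (- i%:R :: fm) fs
  = poch (- b - m%:R) k / poch (- m%:R) k
      * hypF k [:: - k%:R, b & fm] (b + m%:R - k%:R + 1 :: fs).
Proof. by move=> m fm fs; apply: hypF_chu_transform. Qed.
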